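(* Let $n=2^m$ for a positive integer $m$. A set $C\subseteq X^n$ is an $(n,5,n-1;2^{n-1}/n)_3$ code (i.e., $|C|=2^{n-1}/n$ and any two distinct words of $C$ are at Hamming distance at least $5$) if and only if the following two conditions hold: (1) both $e(C)$ and $o(C)$ are binary codes of length $n$, size $2^{n-1}/n$ and minimum distance at least $4$; (2) whenever $\mathbf{x}_1,\mathbf{x}_2\in e(C)$ and $\mathbf{y}_1,\mathbf{y}_2\in o(C)$ satisfy $d(\mathbf{x}_1,\mathbf{y}_1)=d(\mathbf{x}_2,\mathbf{y}_2)=1$ and $d(\mathbf{x}_1,\mathbf{x}_2)=4$, we have $\mathbf{x}_1-\mathbf{x}_2\neq \mathbf{y}_1-\mathbf{y}_2$ (difference taken coordinatewise modulo $2$).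
   Context: $F^n$ is the set of binary words of length $n$; $X^n$ is the set of words of length $n$ over $\{*,0,1\}$ with exactly one $*$ (equivalently, ternary words of length $n$ and weight $n-1$). $d(\cdot,\cdot)$ denotes Hamming distance (number of differing coordinates) on $X^n\cup F^n$. A word $\mathbf{x}\in X^n$ is identified with the pair of binary words obtained by replacing $*$ by $0$ and by $1$; the one of even weight is $e(\mathbf{x})$, the one of odd weight is $o(\mathbf{x})$. For $C\subseteq X^n$, $e(C)=\{e(\mathbf{c}):\mathbf{c}\in C\}$, $o(C)=\{o(\mathbf{c}):\mathbf{c}\in C\}$. *)

From mathcomp Require Import all_boot.
Set Implicit Arguments. Unset Strict Implicit. Unset Printing Implicit Defensive.

(* Ternary words over {*,0,1}: [None] encodes [*], [Some b] encodes the bit b. *)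
Definition tword (n : nat) := {ffun 'I_n -> option bool}.
Definition bword (n : nat) := {ffun 'I_n -> bool}.

Definition inX (n : nat) (x : tword n) : bool := #|[set i | x i == None]| == 1.

Definition hd (T : eqType) (n : nat) (f g : {ffun 'I_n -> T}) : nat :=
  #|[set i | f i != g i]|.

Definition weight (n : nat) (w : bword n) : nat := #|[set i | w i]|.

Definition fill (n : nat) (x : tword n) (b : bool) : bword n :=
  [ffun i => odflt b (x i)].

Definition ev (n : nat) (x : tword n) : bword n :=
  if ~~ odd (weight (fill x false)) then fill x false else fill x true.
Definition od (n : nat) (x : tword n) : bword n :=
  if odd (weight (fill x false)) then fill x false else fill x true.

Definition evC (n : nat) (C : {set tword n}) : {set bword n} := [set ev x | x in C].
Definition odC (n : nat) (C : {set tword n}) : {set bword n} := [set od x | x in C].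

Definition bdiff (n : nat) (x y : bword n) : bword n := [ffun i => x i (+) y i].

Definition is_code (T : finType) (n M d : nat) (C : {set {ffun 'I_n -> T}}) : Prop :=
  #|C| = M /\ (forall x y, x \in C -> y \in C -> x != y -> d <= hd x y).

From mathcomp Require Import all_boot zify.
Set Implicit Arguments. Unset Strict Implicit. Unset Printing Implicit Defensive.

(* The two fillings e(x), o(x) of a word x of X^n are at distance 1, so by the
   triangle inequality d(e(x), e(y)) and d(o(x), o(y)) differ by at most 2;
   thus e is injective on C once o(C) has distance 4, and vice versa.
   If d(x, y) >= 5, removing the two stars loses at most 2, and evenness of
   the distances in e(C) (resp. o(C)) lifts 3 to 4; in (2), d(e(x), o(y)) = 1
   forces x = y, and equal differences would give d(x, y) <= d(e(x), e(y)) = 4.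
   Conversely, if the stars of x and y sit in different coordinates,
   2 d(x, y) >= d(e(x), e(y)) + d(o(x), o(y)) + 2 >= 10; if they sit in the
   same coordinate, d(e(x), e(y)) <= d(x, y) + 1 and (2) rules out
   d(e(x), e(y)) = 4, so by evenness it is at least 6. *)

Lemma cards_sum n (P : pred 'I_n) : #|[set k | P k]| = \sum_k P k.
Proof. by rewrite -sum1dep_card big_mkcond; apply: eq_bigr => k _; case: (P k). Qed.

Section HammingDistance.

Variables (T : eqType) (n : nat).
Implicit Types f g h : {ffun 'I_n -> T}.

Lemma hdE f g : hd f g = \sum_k (f k != g k).
Proof. exact: cards_sum. Qed.

Lemma hdC f g : hd f g = hd g f.
Proof. by rewrite !hdE; apply: eq_bigr => k _; rewrite eq_sym. Qed.

Lemma hdxx f : hd f f = 0.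
Proof. by rewrite hdE big1 // => k _; rewrite eqxx. Qed.

Lemma hd_triangle f g h : hd f h <= hd f g + hd g h.
Proof.
rewrite !hdE -big_split /=; apply: leq_sum => k _.
by case: (f k =P g k) => [->|_] //; case: (f k != h k).
Qed.

End HammingDistance.

Lemma weightE n (w : bword n) : weight w = \sum_k w k.
Proof. exact: cards_sum. Qed.

Lemma odd_hd n (v w : bword n) : odd (hd v w) = odd (weight v) (+) odd (weight w).
Proof.
rewrite hdE !weightE !(big_morph odd oddD (erefl : odd 0 = false)) -big_split /=.
by apply: eq_bigr => k _; case: (v k); case: (w k).
Qed.

Lemma ltn_odd_even k m : odd k -> ~~ odd m -> k <= m -> k < m.
Proof. by move=> ok em; rewrite leq_eqVlt => /predU1P [km|//]; rewrite -km ok in em. Qed.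

Section Fillings.

Variable n : nat.
Implicit Types (x y : tword n) (p q : bool).

Lemma inXP x : inX x -> exists i, forall k, (x k == None) = (k == i).
Proof.
move=> /cards1P [i Hi]; exists i => k.
have : (k \in [set k | x k == None]) = (k \in [set i]) by rewrite Hi.
by rewrite !inE.
Qed.

Lemma sum_star x : inX x -> \sum_k (x k == None : nat) = 1.
Proof. by rewrite /inX cards_sum => /eqP. Qed.

Lemma fillE x p k : fill x p k = odflt p (x k).
Proof. by rewrite ffunE. Qed.

Definition ev_bit x := odd (weight (fill x false)).

Lemma evE x : ev x = fill x (ev_bit x).
Proof. by rewrite /ev /ev_bit; case: (odd _). Qed.

Lemma odE x : od x = fill x (~~ ev_bit x).
Proof. by rewrite /od /ev_bit; case: (odd _). Qed.

Lemma weight_fill x p : inX x -> weight (fill x p) = p + weight (fill x false).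
Proof.
move=> /inXP [i Hi]; rewrite !weightE (bigD1 i) // [in RHS](bigD1 i) //= !fillE.
have /eqP -> : x i == None by rewrite Hi.
rewrite /= add0n; congr (_ + _); apply: eq_bigr => k ki; rewrite !fillE.
by case: (x k) (Hi k) => [b|] //; rewrite (negbTE ki).
Qed.

Lemma ev_even x : inX x -> ~~ odd (weight (ev x)).
Proof. by move=> Hx; rewrite evE weight_fill // oddD oddb addbb. Qed.

Lemma od_odd x : inX x -> odd (weight (od x)).
Proof. by move=> Hx; rewrite odE weight_fill // oddD oddb addNb addbb. Qed.

Lemma hd_fill_negb x p : inX x -> hd (fill x p) (fill x (~~ p)) = 1.
Proof.
move=> Hx; rewrite hdE -(sum_star Hx); apply: eq_bigr => k _.
by rewrite !fillE; case: (x k) => [[]|]; case: p.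
Qed.

Lemma hd_ev_od x : inX x -> hd (ev x) (od x) = 1.
Proof. by move=> Hx; rewrite evE odE hd_fill_negb. Qed.

Lemma fill_negb_inj x y p q :
  fill x p = fill y q -> fill x (~~ p) = fill y (~~ q) -> x = y.
Proof.
move=> Ep Enp; apply/ffunP => k.
move/ffunP/(_ k): Ep; move/ffunP/(_ k): Enp.
by rewrite !fillE; case: (x k) (y k) => [[]|] [[]|]; case: p; case: q.
Qed.

Lemma ev_od_inj x y : ev x = ev y -> od x = od y -> x = y.
Proof. by rewrite evE odE evE odE; apply: fill_negb_inj. Qed.

Lemma hd_le_hd_fill x y p q : inX x -> inX y ->
  hd x y <= hd (fill x p) (fill y q) + 2.
Proof.
move=> Hx Hy; rewrite !hdE -[2]/(1 + 1) -{1}(sum_star Hx) -(sum_star Hy).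
rewrite addnA -!big_split /=.
apply: leq_sum => k _; rewrite !fillE.
by case: (x k) (y k) p q => [[]|] [[]|] [] [].
Qed.

Lemma hd_fill_negb_le x y p q : inX x -> inX y ->
  hd (fill x (~~ p)) (fill y (~~ q)) <= hd (fill x p) (fill y q) + 2.
Proof.
move=> Hx Hy.
have := hd_triangle (fill x (~~ p)) (fill x p) (fill y (~~ q)).
have := hd_triangle (fill x p) (fill y q) (fill y (~~ q)).
by rewrite [hd _ (fill x p)]hdC !hd_fill_negb //; lia.
Qed.

Lemma hd_od_le x y : inX x -> inX y -> hd (od x) (od y) <= hd (ev x) (ev y) + 2.
Proof. by rewrite !evE !odE; apply: hd_fill_negb_le. Qed.

Lemma hd_ev_le x y : inX x -> inX y -> hd (ev x) (ev y) <= hd (od x) (od y) + 2.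
Proof.
move=> Hx Hy; have := hd_fill_negb_le (~~ ev_bit x) (~~ ev_bit y) Hx Hy.
by rewrite !negbK -!evE -!odE.
Qed.

Lemma hd_le_hd_fill_bdiff x y p q :
  bdiff (fill x p) (fill y q) = bdiff (fill x (~~ p)) (fill y (~~ q)) ->
  hd x y <= hd (fill x p) (fill y q).
Proof.
move=> E; rewrite !hdE; apply: leq_sum => k _.
move/ffunP/(_ k): E; rewrite !ffunE.
by case: (x k) (y k) => [[]|] [[]|]; case: p; case: q.
Qed.

Section SameStar.

Variables (x y : tword n).
Hypothesis same_star : forall k, (x k == None) = (y k == None).

Lemma hd_fill_same_star p q : inX x -> hd (fill x p) (fill y q) <= hd x y + 1.
Proof.
move=> Hx; rewrite !hdE -(sum_star Hx) -big_split /=; apply: leq_sum => k _.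
by rewrite !fillE; case: (x k) (y k) (same_star k) => [[]|] [[]|] // _; case: p; case: q.
Qed.

Lemma bdiff_fill_same_star p q :
  bdiff (fill x p) (fill y q) = bdiff (fill x (~~ p)) (fill y (~~ q)).
Proof.
apply/ffunP => k; rewrite !ffunE.
by case: (x k) (y k) (same_star k) => [[]|] [[]|] // _; case: p; case: q.
Qed.

End SameStar.

(* Where exactly one of x, y has its star, exactly one of the two filling pairs
   differs; elsewhere both pairs differ iff x and y do. *)
Lemma hd_fill_distinct_star x y p q : inX x -> inX y ->
  (forall k, ~~ ((x k == None) && (y k == None))) ->
  hd (fill x p) (fill y q) + hd (fill x (~~ p)) (fill y (~~ q)) + 2 <= 2 * hd x y.
Proof.
move=> Hx Hy Hxy; rewrite !hdE big_distrr /=.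
rewrite [X in _ + X <= _](_ : 2 = \sum_k (x k == None : nat) + \sum_k (y k == None : nat)).
  rewrite addnA -!big_split /=; apply: leq_sum => k _; rewrite !fillE.
  by case: (x k) (y k) (Hxy k) => [[]|] [[]|] // _; case: p; case: q.
by rewrite !sum_star.
Qed.

End Fillings.

Lemma is_code_imset (T U : finType) n M d (C : {set {ffun 'I_n -> T}})
    (f : {ffun 'I_n -> T} -> {ffun 'I_n -> U}) :
  #|C| = M -> {in C &, forall x y, x != y -> d <= hd (f x) (f y)} -> 0 < d ->
  is_code M d (f @: C).
Proof.
move=> CM Hd d_gt0.
have f_inj : {in C &, injective f}.
  move=> x y xC yC fxy; apply/eqP; apply: contraLR d_gt0 => /(Hd _ _ xC yC).
  by rewrite fxy hdxx leqn0 => /eqP ->.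
split; first by rewrite card_in_imset.
move=> _ _ /imsetP [x xC ->] /imsetP [y yC ->] fxy.
by apply: Hd => //; apply: contraNneq fxy => ->.
Qed.

Section CodesInX.

Variables (n M : nat) (C : {set tword n}).
Hypothesis C_inX : forall c, c \in C -> inX c.

Lemma hd_ev_even x y : x \in C -> y \in C -> ~~ odd (hd (ev x) (ev y)).
Proof. by move=> xC yC; rewrite odd_hd; case: odd (ev_even (C_inX xC)) (ev_even (C_inX yC)). Qed.

Lemma hd_od_even x y : x \in C -> y \in C -> ~~ odd (hd (od x) (od y)).
Proof. by move=> xC yC; rewrite odd_hd (od_odd (C_inX xC)) (od_odd (C_inX yC)). Qed.

Section Forward.

Hypothesis C_code : is_code M 5 C.

Lemma code5_ev x y : x \in C -> y \in C -> x != y -> 4 <= hd (ev x) (ev y).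
Proof.
move=> xC yC xy; apply: (@ltn_odd_even 3 _ isT (hd_ev_even xC yC)).
rewrite -(leq_add2r 2) !evE; apply: leq_trans (C_code.2 _ _ xC yC xy) _.
exact: hd_le_hd_fill (C_inX xC) (C_inX yC).
Qed.

Lemma code5_od x y : x \in C -> y \in C -> x != y -> 4 <= hd (od x) (od y).
Proof.
move=> xC yC xy; apply: (@ltn_odd_even 3 _ isT (hd_od_even xC yC)).
rewrite -(leq_add2r 2) !odE; apply: leq_trans (C_code.2 _ _ xC yC xy) _.
exact: hd_le_hd_fill (C_inX xC) (C_inX yC).
Qed.

Lemma code5_hd_ev_od x y : x \in C -> y \in C -> hd (ev x) (od y) = 1 -> x = y.
Proof.
move=> xC yC Hxy; apply/eqP/negPn/negP => xy.
have := hd_triangle (ev x) (od y) (ev y).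
by rewrite Hxy [hd (od y) _]hdC hd_ev_od ?C_inX //; move: (code5_ev xC yC xy); lia.
Qed.

Lemma code5_bdiff x1 x2 y1 y2 :
  x1 \in evC C -> x2 \in evC C -> y1 \in odC C -> y2 \in odC C ->
  hd x1 y1 = 1 -> hd x2 y2 = 1 -> hd x1 x2 = 4 -> bdiff x1 x2 != bdiff y1 y2.
Proof.
move=> /imsetP [c1 c1C ->] /imsetP [c2 c2C ->] /imsetP [d1 d1C ->] /imsetP [d2 d2C ->].
move=> /(code5_hd_ev_od c1C d1C) <- /(code5_hd_ev_od c2C d2C) <- h4.
have c12 : c1 != c2 by apply: contra_eqN h4 => /eqP ->; rewrite hdxx.
apply/eqP; rewrite evE evE odE odE => /hd_le_hd_fill_bdiff.
by rewrite -!evE h4 => /(leq_trans (C_code.2 _ _ c1C c2C c12)).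
Qed.

End Forward.

Section Backward.

Hypotheses (ev_code : is_code M 4 (evC C)) (od_code : is_code M 4 (odC C)).
Hypothesis bdiff_cond : forall x1 x2 y1 y2 : bword n,
  x1 \in evC C -> x2 \in evC C -> y1 \in odC C -> y2 \in odC C ->
  hd x1 y1 = 1 -> hd x2 y2 = 1 -> hd x1 x2 = 4 -> bdiff x1 x2 != bdiff y1 y2.

Lemma code4_ev_inj : {in C &, injective (@ev n)}.
Proof.
move=> x y xC yC Exy; apply: ev_od_inj => //; apply/eqP/negPn/negP => Oxy.
have := leq_trans (od_code.2 _ _ (imset_f _ xC) (imset_f _ yC) Oxy).
by move/(_ _ (hd_od_le (C_inX xC) (C_inX yC))); rewrite Exy hdxx.
Qed.

Lemma code4_od_inj : {in C &, injective (@od n)}.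
Proof.
move=> x y xC yC Oxy; apply: ev_od_inj => //; apply/eqP/negPn/negP => Exy.
have := leq_trans (ev_code.2 _ _ (imset_f _ xC) (imset_f _ yC) Exy).
by move/(_ _ (hd_ev_le (C_inX xC) (C_inX yC))); rewrite Oxy hdxx.
Qed.

Lemma code4_ev x y : x \in C -> y \in C -> x != y -> 4 <= hd (ev x) (ev y).
Proof.
move=> xC yC xy; apply: ev_code.2; rewrite ?imset_f //.
by apply: contraNneq xy => /code4_ev_inj ->.
Qed.

Lemma code4_od x y : x \in C -> y \in C -> x != y -> 4 <= hd (od x) (od y).
Proof.
move=> xC yC xy; apply: od_code.2; rewrite ?imset_f //.
by apply: contraNneq xy => /code4_od_inj ->.
Qed.

Lemma code4_same_star x y : x \in C -> y \in C -> x != y ->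
  (forall k, (x k == None) = (y k == None)) -> 5 <= hd x y.
Proof.
move=> xC yC xy same; have Hx := C_inX xC; have Hy := C_inX yC.
have ev_ne4 : hd (ev x) (ev y) != 4.
  apply/eqP => h4; move: (bdiff_cond (imset_f _ xC) (imset_f _ yC) (imset_f _ xC)
    (imset_f _ yC) (hd_ev_od Hx) (hd_ev_od Hy) h4).
  by rewrite evE evE odE odE bdiff_fill_same_star // eqxx.
have ev_gt5 : 5 < hd (ev x) (ev y).
  apply: (@ltn_odd_even 5 _ isT (hd_ev_even xC yC)).
  by rewrite ltn_neqAle eq_sym ev_ne4 code4_ev.
have := hd_fill_same_star same (ev_bit x) (ev_bit y) Hx; rewrite -!evE => ev_le.
by rewrite -(leq_add2r 1); apply: leq_trans ev_gt5 ev_le.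
Qed.

Lemma code4_distinct_star x y : x \in C -> y \in C -> x != y ->
  (forall k, ~~ ((x k == None) && (y k == None))) -> 5 <= hd x y.
Proof.
move=> xC yC xy distinct; have := code4_ev xC yC xy; have := code4_od xC yC xy.
have := hd_fill_distinct_star (ev_bit x) (ev_bit y) (C_inX xC) (C_inX yC) distinct.
rewrite -evE -evE -odE -odE => bound od4 ev4.
rewrite -(leq_pmul2l (isT : 0 < 2)); apply: leq_trans bound.
exact: leq_add (leq_add ev4 od4) (leqnn 2).
Qed.

Lemma code4_code5 : is_code M 5 C.
Proof.
split; first by rewrite -ev_code.1 card_in_imset //; apply: code4_ev_inj.
move=> x y xC yC xy.
have [i Hi] := inXP (C_inX xC); have [j Hj] := inXP (C_inX yC).
have [ij|ij] := eqVneq i j.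
  by apply: code4_same_star => // k; rewrite Hi Hj ij.
apply: code4_distinct_star => // k; rewrite Hi Hj.
by apply: contra ij => /andP [/eqP <- /eqP <-].
Qed.

End Backward.

End CodesInX.

Theorem lemma2 (m : nat) (n : nat) (C : {set tword n}) :
  0 < m -> n = 2 ^ m ->
  (forall c, c \in C -> inX c) ->
  (is_code (2 ^ n.-1 %/ n) 5 C <->
   (is_code (2 ^ n.-1 %/ n) 4 (evC C) /\ is_code (2 ^ n.-1 %/ n) 4 (odC C)) /\
   (forall x1 x2 y1 y2 : bword n,
      x1 \in evC C -> x2 \in evC C -> y1 \in odC C -> y2 \in odC C ->
      hd x1 y1 = 1 -> hd x2 y2 = 1 -> hd x1 x2 = 4 ->
      bdiff x1 x2 != bdiff y1 y2)).
Proof.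
move=> _ _ C_inX; split => [C_code | [[ev_code od_code] bdiff_cond]].
  split; first split.
  - exact: is_code_imset C_code.1 (code5_ev C_inX C_code) isT.
  - exact: is_code_imset C_code.1 (code5_od C_inX C_code) isT.
  exact: code5_bdiff C_inX C_code.
exact: code4_code5 C_inX ev_code od_code bdiff_cond.
Qed.
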